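(* Let $\mathcal{M}$ be a countable Scott set coded by $M=\bigoplus_i X_i$ and let $C \subseteq \omega^2$. If $\mathcal{U}^{\mathcal{M}}_C$ is an $\mathcal{M}$-minimal largeness class, then $\mathcal{U}^{\mathcal{M}}_C$ is partition regular.
   Context: A largeness class is a non-empty $\mathcal{A} \subseteq 2^\omega$ closed upward under $\subseteq$ such that for every finite cover $Y_0\cup\dots\cup Y_{k-1}=\omega$ some $Y_j \in \mathcal{A}$. A partition regular class is a largeness class $\mathcal{L}$ such that for every $X\in\mathcal{L}$ and every finite cover $Y_0\cup\dots\cup Y_{k-1}\supseteq X$ some $Y_j \in \mathcal{L}$. A Scott set is a collection of sets closed under Turing reducibility and join such that every infinite binary tree in it has a path in it; it is countable coded by $M$ if it equals $\{X_i : i\in\omega\}$ with $M = \bigoplus_i X_i$. Fix an effective enumeration $\mathcal{U}^Z_0,\mathcal{U}^Z_1,\dots$ (uniform in the oracle $Z$) of all $\Sigma^0_1(Z)$ classes which are upward-closed under $\subseteq$; for $C\subseteq\omega^2$, $\mathcal{U}^{\mathcal{M}}_C = \bigcap_{\langle e,i\rangle\in C}\mathcal{U}^{X_i}_e$. A class $\mathcal{A}$ is $\mathcal{M}$-minimal if for every $X\in\mathcal{M}$ and $e\in\omega$, either $\mathcal{A}\subseteq\mathcal{U}^X_e$ or $\mathcal{A}\cap\mathcal{U}^X_e$ is not a largeness class. *)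

From Stdlib Require Cantor.
From mathcomp Require Import all_boot.

Set Implicit Arguments.
Unset Strict Implicit.
Unset Printing Implicit Defensive.

Definition set := nat -> bool.
Definition cls := set -> Prop.

Definition subset (X Y : set) : Prop := forall n, X n -> Y n.

Definition pair (x y : nat) : nat := Cantor.to_nat (x, y).
Definition unpair (n : nat) : nat * nat := Cantor.of_nat n.

(* Oracle computation: mu-recursive functions with an oracle Z,         *)
(* coded by natural numbers, evaluated with a fuel bound.               *)
(*   code c, (t, r) := unpair c, by t:                                  *)
(*   0 : zero function                                                  *)
(*   1 : successor of first argument                                    *)
(*   2 : projection onto argument r                                     *)
(*   3 : oracle query  Z (first argument)  (as 0/1)                     *)
(*   4 : composition, r = pair f gs, gs a code of a list of codes       *)
(*   5 : primitive recursion on the first argument, r = pair f g        *)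
(*       R(0, xs) = f xs,  R(n+1, xs) = g (n :: R(n,xs) :: xs)          *)
(*   6 : unbounded minimisation, r = f : mu y. f (y :: xs) = 0          *)
(*   other : nowhere defined                                            *)
(* Lists of naturals are coded by 0 = nil, (pair h t).+1 = h :: t.      *)
Fixpoint decode_list_fuel (k n : nat) : seq nat :=
  match k with
  | 0 => [::]
  | k'.+1 =>
      match n with
      | 0 => [::]
      | n'.+1 => (unpair n').1 :: decode_list_fuel k' (unpair n').2
      end
  end.
Definition decode_list (n : nat) : seq nat := decode_list_fuel n.+1 n.

Fixpoint all_some (s : seq (option nat)) : option (seq nat) :=
  match s with
  | [::] => Some [::]
  | o :: s' =>
      match o, all_some s' with
      | Some v, Some vs => Some (v :: vs)
      | _, _ => None
      end
  end.

Fixpoint mu_search (F : nat -> option nat) (y0 bound : nat) : option nat :=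
  match bound with
  | 0 => None
  | b.+1 =>
      match F y0 with
      | Some 0 => Some y0
      | Some _ => mu_search F y0.+1 b
      | None => None
      end
  end.

Fixpoint prim_rec (G : nat -> nat -> option nat) (n : nat) (base : option nat)
  : option nat :=
  match n with
  | 0 => base
  | n'.+1 =>
      match prim_rec G n' base with
      | Some acc => G n' acc
      | None => None
      end
  end.

Fixpoint eval (k : nat) (Z : set) (c : nat) (xs : seq nat) : option nat :=
  match k with
  | 0 => None
  | k'.+1 =>
      let t := (unpair c).1 in
      let r := (unpair c).2 in
      match t with
      | 0 => Some 0
      | 1 => Some (head 0 xs).+1
      | 2 => Some (nth 0 xs r)
      | 3 => Some (nat_of_bool (Z (head 0 xs)))
      | 4 =>
          let f := (unpair r).1 in
          let gs := decode_list (unpair r).2 in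
          match all_some (map (fun g => eval k' Z g xs) gs) with
          | Some ys => eval k' Z f ys
          | None => None
          end
      | 5 =>
          let f := (unpair r).1 in
          let g := (unpair r).2 in
          let rest := behead xs in
          prim_rec (fun i acc => eval k' Z g [:: i, acc & rest])
                   (head 0 xs) (eval k' Z f rest)
      | 6 => mu_search (fun y => eval k' Z r (y :: xs)) 0 k'
      | _ => None
      end
  end.

Definition halts (Z : set) (e n : nat) : Prop :=
  exists k v, eval k Z e [:: n] = Some v.

Definition turing_le (X Z : set) : Prop :=
  exists e, forall n, exists k, eval k Z e [:: n] = Some (nat_of_bool (X n)).

Definition join (X Y : set) : set :=
  fun n => if odd n then Y n./2 else X n./2.

(* Binary strings coded by naturals (bijective base-2 numeration).      *)
Fixpoint code_str (s : seq bool) : nat :=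
  match s with
  | [::] => 0
  | b :: s' => (code_str s').*2 + (nat_of_bool b).+1
  end.

Definition is_tree (T : set) : Prop :=
  forall (s : seq bool) (n : nat), T (code_str s) -> T (code_str (take n s)).

Definition infinite (T : set) : Prop := forall m, exists n, m <= n /\ T n.

Definition is_path (P : set) (T : set) : Prop :=
  forall n, T (code_str (mkseq P n)).

Definition scott_set (S : cls) : Prop :=
  [/\ (forall X Y, S X -> turing_le Y X -> S Y),
      (forall X Y, S X -> S Y -> S (join X Y)) &
      (forall T, S T -> is_tree T -> infinite T ->
         exists P, S P /\ is_path P T)].

Definition coded_by (Xs : nat -> set) : cls :=
  fun Y => exists i, forall n, Y n = Xs i n.

(* the code M = (+)_i X_i  (M <i,n> = X_i n) -- recorded for reference *)
Definition code_of (Xs : nat -> set) : set :=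
  fun m => Xs (unpair m).1 (unpair m).2.

(* The enumeration of upward-closed Sigma^0_1(Z) classes:               *)
(*   U^Z_e = { X : exists finite D subset of X whose canonical index    *)
(*             lies in W^Z_e }                                          *)
Definition canon_index (D : seq nat) : nat := \sum_(x <- undup D) 2 ^ x.

Definition U (Z : set) (e : nat) : cls :=
  fun X => exists D : seq nat,
    (forall x, x \in D -> X x) /\ halts Z e (canon_index D).

Definition U_C (Xs : nat -> set) (C : nat -> nat -> Prop) : cls :=
  fun X => forall e i, C e i -> U (Xs i) e X.

Definition largeness (A : cls) : Prop :=
  [/\ (exists X, A X),
      (forall X Y, A X -> subset X Y -> A Y) &
      (forall (k : nat) (Y : nat -> set),
         (forall n, exists2 j, j < k & Y j n) ->
         exists2 j, j < k & A (Y j))].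

Definition partition_regular (A : cls) : Prop :=
  largeness A /\
  forall X, A X ->
    forall (k : nat) (Y : nat -> set),
      (forall n, X n -> exists2 j, j < k & Y j n) ->
      exists2 j, j < k & A (Y j).

Definition minimal (Xs : nat -> set) (A : cls) : Prop :=
  forall X, coded_by Xs X -> forall e : nat,
    (forall Y, A Y -> U X e Y) \/
    ~ largeness (fun Y => A Y /\ U X e Y).

From Pilot Require Import Defs.
From mathcomp Require Import all_boot zify.
From Stdlib Require Import Classical ClassicalEpsilon.

Set Implicit Arguments.
Unset Strict Implicit.
Unset Printing Implicit Defensive.

(* Let A = U^M_C be M-minimal, X in A and X contained in Y0 \/ Y1 with
   Y0, Y1 outside A; pick <e0,i0>, <e1,i1> in C with Y0 outside U^{X_i0}_e0
   and Y1 outside U^{X_i1}_e1.  Let V be the class of sets containing a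
   finite set D such that every 2-colouring of D has a first colour class
   in U^{X_i0}_e0 or a second colour class in U^{X_i1}_e1.  By compactness
   V contains every set which is indivisible for A (every 2-cover has a
   piece in A), and these sets form a largeness class; so A /\ V is a
   largeness class and, V being a Sigma^0_1(X_i0 (+) X_i1) class, minimality
   gives A <= V.  Then X in V, and colouring by Y0 puts Y0 or Y1 back in A.
   Induction on the number of pieces (using that the empty set is not in A,
   again by minimality) finishes the proof. *)

(* Cantor pairing: the two projections of [unpair] are bounded by their
   argument, strictly for the second one when the first is positive; this
   makes recursion on program codes well founded. *)

Lemma unpair_pair x y : unpair (pair x y) = (x, y).
Proof. exact: Cantor.cancel_of_to. Qed.

Lemma pair_unpair n : pair (unpair n).1 (unpair n).2 = n.
Proof. by rewrite /pair /unpair -surjective_pairing; exact: Cantor.cancel_to_of. Qed.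

Lemma pair_ge_sum x y : x + y <= pair x y.
Proof. apply/leP; have := Cantor.to_nat_spec x y; rewrite /pair; nia. Qed.

Lemma unpair1_le n : (unpair n).1 <= n.
Proof.
by rewrite -{2}(pair_unpair n); apply: leq_trans (pair_ge_sum _ _); exact: leq_addr.
Qed.

Lemma unpair2_le n : (unpair n).2 <= n.
Proof.
by rewrite -{2}(pair_unpair n); apply: leq_trans (pair_ge_sum _ _); exact: leq_addl.
Qed.

Lemma unpair2_lt n : 0 < (unpair n).1 -> (unpair n).2 < n.
Proof.
move=> /ltP pos; rewrite -{2}(pair_unpair n); apply/ltP.
have := Cantor.to_nat_spec (unpair n).1 (unpair n).2; rewrite /pair; nia.
Qed.

Arguments pair : simpl never.
Arguments unpair : simpl never.

Lemma evalSE k Z c xs : eval k.+1 Z c xs =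
  match (unpair c).1 with
  | 0 => Some 0
  | 1 => Some (head 0 xs).+1
  | 2 => Some (nth 0 xs (unpair c).2)
  | 3 => Some (nat_of_bool (Z (head 0 xs)))
  | 4 =>
      match all_some (map (fun g => eval k Z g xs)
                          (decode_list (unpair (unpair c).2).2)) with
      | Some ys => eval k Z (unpair (unpair c).2).1 ys
      | None => None
      end
  | 5 =>
      prim_rec (fun i acc => eval k Z (unpair (unpair c).2).2 [:: i, acc & behead xs])
               (head 0 xs) (eval k Z (unpair (unpair c).2).1 (behead xs))
  | 6 => mu_search (fun y => eval k Z (unpair c).2 (y :: xs)) 0 k
  | _ => None
  end.
Proof. by []. Qed.

(* Each combinator of [eval] preserves definedness when its parameters
   become "more defined"; hence so does [eval] when the fuel grows. *)

Lemma all_some_mono (A : Type) (F F' : A -> option nat) l ys :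
  (forall a v, F a = Some v -> F' a = Some v) ->
  all_some (map F l) = Some ys -> all_some (map F' l) = Some ys.
Proof.
move=> FF'; elim: l ys => [|a l IH] ys //=.
case Ea: (F a) => [v|] //; case El: (all_some (map F l)) => [vs|] // [<-].
by rewrite (FF' _ _ Ea) (IH _ El).
Qed.

Lemma prim_rec_mono G G' n b b' v :
  (forall i a w, G i a = Some w -> G' i a = Some w) ->
  (forall w, b = Some w -> b' = Some w) ->
  prim_rec G n b = Some v -> prim_rec G' n b' = Some v.
Proof.
move=> GG' bb'; elim: n v => [|n IH] v /=; first exact: bb'.
by case En: (prim_rec G n b) => [a|] // Ga; rewrite (IH _ En) (GG' _ _ _ Ga).
Qed.

Lemma mu_search_mono F F' y0 b b' v :
  (forall y w, F y = Some w -> F' y = Some w) -> b <= b' ->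
  mu_search F y0 b = Some v -> mu_search F' y0 b' = Some v.
Proof.
move=> FF'; elim: b y0 b' => [|b IH] y0 [|b'] //= le_bb'.
by case Ey: (F y0) => [[|w]|] //; rewrite (FF' _ _ Ey) //; exact: IH.
Qed.

Lemma eval_mono k k' Z c xs v :
  k <= k' -> eval k Z c xs = Some v -> eval k' Z c xs = Some v.
Proof.
elim: k k' c xs v => [|k IH] [|k'] c xs v //= le_kk'.
case: (unpair c).1 => [|[|[|[|[|[|[|t]]]]]]] //.
- case Eys: (all_some _) => [ys|] // Ef.
  rewrite (all_some_mono (F := fun g => eval k Z g xs) (ys := ys)) //.
    exact: IH Ef.
  by move=> a w; apply: IH.
- by apply: prim_rec_mono => *; apply: IH; eauto.
- by apply: mu_search_mono => // *; apply: IH; eauto.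
Qed.

Lemma eval_det k k' Z c xs v v' :
  eval k Z c xs = Some v -> eval k' Z c xs = Some v' -> v = v'.
Proof.
move=> /(eval_mono (leq_maxl k k')) Ev /(eval_mono (leq_maxr k k')).
by rewrite Ev => -[].
Qed.

Inductive prog : Type :=
| PZ | PS | PP (i : nat) | PO | PC (f : prog) (gs : seq prog) | PR (f g : prog).

(* The induction principle with a hypothesis for every argument of [PC]. *)
Definition prog_nested_ind (P : prog -> Prop) (h0 : P PZ) (h1 : P PS)
    (h2 : forall i, P (PP i)) (h3 : P PO)
    (h4 : forall f gs, P f -> (forall g, List.In g gs -> P g) -> P (PC f gs))
    (h5 : forall f g, P f -> P g -> P (PR f g)) : forall p, P p :=
  fix IH p := match p with
  | PZ => h0 | PS => h1 | PP i => h2 i | PO => h3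
  | PC f gs => h4 f gs (IH f)
     ((fix F (l : seq prog) : forall g, List.In g l -> P g :=
        match l with
        | [::] => fun g (H : False) => False_ind _ H
        | a :: l' => fun g H => match H with
                    | or_introl E => eq_ind a P (IH a) g E
                    | or_intror H' => F l' g H' end
        end) gs)
  | PR f g => h5 f g (IH f) (IH g)
  end.

Fixpoint prec (b : nat) (G : nat -> nat -> nat) (n : nat) : nat :=
  if n is n'.+1 then G n' (prec b G n') else b.

(* Denotational semantics of programs; like [eval], recursion is on the
   first argument and the other arguments are passed in the tail. *)
Fixpoint sem (Z : set) (p : prog) (xs : seq nat) {struct p} : nat :=
  match p with
  | PZ => 0
  | PS => (head 0 xs).+1
  | PP i => nth 0 xs i
  | PO => nat_of_bool (Z (head 0 xs))
  | PC f gs => sem Z f (map (fun g => sem Z g xs) gs)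
  | PR f g => let rest := behead xs in
     (fix R n := if n is n'.+1 then sem Z g [:: n', R n' & rest]
                 else sem Z f rest) (head 0 xs)
  end.

Lemma semC Z f gs xs : sem Z (PC f gs) xs = sem Z f (map (fun g => sem Z g xs) gs).
Proof. by []. Qed.

Lemma semC1 Z f g xs : sem Z (PC f [:: g]) xs = sem Z f [:: sem Z g xs].
Proof. by []. Qed.

Lemma semC2 Z f g h xs :
  sem Z (PC f [:: g; h]) xs = sem Z f [:: sem Z g xs; sem Z h xs].
Proof. by []. Qed.

Lemma semR Z f g n rest : sem Z (PR f g) (n :: rest) =
  prec (sem Z f rest) (fun i acc => sem Z g [:: i, acc & rest]) n.
Proof. by elim: n => //= n ->. Qed.

Lemma prec_ext b G G' n :
  (forall i acc, G i acc = G' i acc) -> prec b G n = prec b G' n.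
Proof. by move=> GG'; elim: n => //= n ->. Qed.

Fixpoint enc_list (l : seq nat) : nat :=
  if l is h :: t then (pair h (enc_list t)).+1 else 0.

Lemma enc_list_size l : size l <= enc_list l.
Proof. by elim: l => //= h t IH; have := pair_ge_sum h (enc_list t); lia. Qed.

Lemma decode_enc l : decode_list (enc_list l) = l.
Proof.
suff dec k : size l < k -> decode_list_fuel k (enc_list l) = l.
  by apply: dec; have := enc_list_size l; lia.
by elim: l k => [|h t IH] [|k] //= lt_tk; rewrite unpair_pair /= IH.
Qed.

Fixpoint compile (p : prog) : nat :=
  match p with
  | PZ => pair 0 0
  | PS => pair 1 0
  | PP i => pair 2 i
  | PO => pair 3 0
  | PC f gs => pair 4 (pair (compile f) (enc_list (map compile gs)))
  | PR f g => pair 5 (pair (compile f) (compile g))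
  end.

Definition computes (Z : set) (c : nat) (F : seq nat -> nat) : Prop :=
  forall xs, exists k, eval k Z c xs = Some (F xs).

Lemma all_some_computes Z (gs : seq prog) xs :
  (forall g, List.In g gs -> computes Z (compile g) (sem Z g)) ->
  exists k, all_some (map (fun g => eval k Z g xs) (map compile gs)) =
            Some (map (fun g => sem Z g xs) gs).
Proof.
elim: gs => [|g gs IH] comp_gs; first by exists 0.
have [k1 E1] := comp_gs g (or_introl erefl) xs.
have [k2 E2] := IH (fun g' in_g' => comp_gs g' (or_intror in_g')).
exists (maxn k1 k2) => /=; rewrite (eval_mono (leq_maxl k1 k2) E1).
rewrite (all_some_mono (F := fun g => eval k2 Z g xs) _ E2) //.
by move=> a v; apply: eval_mono; exact: leq_maxr.
Qed.

Lemma prim_rec_computes Z f g rest n :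
  computes Z (compile f) (sem Z f) -> computes Z (compile g) (sem Z g) ->
  exists k, prim_rec (fun i acc => eval k Z (compile g) [:: i, acc & rest]) n
              (eval k Z (compile f) rest) =
            Some (prec (sem Z f rest) (fun i acc => sem Z g [:: i, acc & rest]) n).
Proof.
move=> comp_f comp_g; elim: n => [|n [k IH]] /=; first exact: comp_f.
have [k2 E2] := comp_g [:: n, prec (sem Z f rest) (fun i acc => sem Z g [:: i, acc & rest]) n
                           & rest].
exists (maxn k k2).
rewrite (prim_rec_mono (G := fun i acc => eval k Z (compile g) [:: i, acc & rest])
                       (b := eval k Z (compile f) rest) _ _ IH).
- exact: eval_mono (leq_maxr _ _) E2.
- by move=> *; apply: eval_mono (leq_maxl _ _) _.
- by move=> *; apply: eval_mono (leq_maxl _ _) _.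
Qed.

Lemma compile_correct Z p : computes Z (compile p) (sem Z p).
Proof.
elim/prog_nested_ind: p; try by move=> *; exists 1; rewrite evalSE unpair_pair.
- move=> f gs comp_f comp_gs xs.
  have [k1 E1] := all_some_computes xs comp_gs.
  have [k2 E2] := comp_f (map (fun g => sem Z g xs) gs).
  exists (maxn k1 k2).+1; rewrite evalSE !unpair_pair /= decode_enc.
  rewrite (all_some_mono (F := fun g => eval k1 Z g xs) _ E1).
    exact: eval_mono (leq_maxr _ _) E2.
  by move=> a v; apply: eval_mono; exact: leq_maxl.
- move=> f g comp_f comp_g [|n rest].
    have [k E] := prim_rec_computes [::] 0 comp_f comp_g.
    by exists k.+1; rewrite evalSE !unpair_pair.
  have [k E] := prim_rec_computes rest n comp_f comp_g.
  by exists k.+1; rewrite evalSE !unpair_pair /= E -semR.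
Qed.

(* A small library of programs; each is made opaque as soon as its semantics
   is established, so that later programs are reasoned about compositionally. *)

Fixpoint pconst c := if c is c'.+1 then PC PS [:: pconst c'] else PZ.
Lemma sem_pconst Z c xs : sem Z (pconst c) xs = c.
Proof. by elim: c => //= c ->. Qed.
Opaque pconst.

Definition padd := PR (PP 0) (PC PS [:: PP 1]).
Lemma sem_padd Z x y : sem Z padd [:: x; y] = x + y.
Proof. by rewrite semR; elim: x => //= x ->; rewrite addSn. Qed.
Opaque padd.

Definition pmul := PR PZ (PC padd [:: PP 1; PP 2]).
Lemma sem_pmul Z x y : sem Z pmul [:: x; y] = x * y.
Proof. by rewrite semR; elim: x => //= x ->; rewrite sem_padd mulSn addnC. Qed.
Opaque pmul.

Definition piszero := PR (pconst 1) PZ.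
Lemma sem_piszero Z x : sem Z piszero [:: x] = nat_of_bool (x == 0).
Proof. by rewrite semR; case: x => //=; exact: sem_pconst. Qed.
Opaque piszero.

Definition psign := PR PZ (pconst 1).
Lemma sem_psign Z x : sem Z psign [:: x] = nat_of_bool (x != 0).
Proof. by rewrite semR; case: x => //= *; exact: sem_pconst. Qed.
Opaque psign.

Definition ppred := PR PZ (PP 0).
Lemma sem_ppred Z x : sem Z ppred [:: x] = x.-1.
Proof. by rewrite semR; case: x. Qed.
Opaque ppred.

Definition podd := PR PZ (PC piszero [:: PP 1]).
Lemma sem_podd Z x : sem Z podd [:: x] = nat_of_bool (odd x).
Proof. by rewrite semR; elim: x => //= x ->; rewrite sem_piszero; case: (odd x). Qed.
Opaque podd.

Definition phalf := PR PZ (PC padd [:: PP 1; PC podd [:: PP 0]]).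
Lemma sem_phalf Z x : sem Z phalf [:: x] = x./2.
Proof.
rewrite semR; elim: x => //= x ->.
by rewrite sem_podd sem_padd -/(uphalf x) uphalf_half addnC.
Qed.
Opaque phalf.

Definition bit (x i : nat) : bool := odd (iter i half x).

Definition pbit := PC podd [:: PR (PP 0) (PC phalf [:: PP 1])].
Lemma sem_pbit Z i x : sem Z pbit [:: i; x] = nat_of_bool (bit x i).
Proof.
rewrite semC1 semR sem_podd /bit; congr (nat_of_bool (odd _)).
by elim: i => //= i ->; rewrite sem_phalf.
Qed.
Opaque pbit.

Definition pimpl := PC piszero [:: PC pmul [:: PP 0; PC piszero [:: PP 1]]].
Lemma sem_pimpl Z a b :
  sem Z pimpl [:: nat_of_bool a; nat_of_bool b] = nat_of_bool (a ==> b).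
Proof. by rewrite /= sem_piszero sem_pmul sem_piszero; case: a; case: b. Qed.
Opaque pimpl.

Definition por := PC psign [:: PC padd [:: PP 0; PP 1]].
Lemma sem_por Z a b :
  sem Z por [:: nat_of_bool a; nat_of_bool b] = nat_of_bool (a || b).
Proof. by rewrite /= sem_padd sem_psign; case: a; case: b. Qed.
Opaque por.

Lemma nat_of_bool_neq0 b : (nat_of_bool b != 0) = b.
Proof. by case: b. Qed.

Definition pargs i a := map PP (iota i a).

Lemma sem_pargs Z pre xs :
  map (fun g => sem Z g (pre ++ xs)) (pargs (size pre) (size xs)) = xs.
Proof.
elim: xs pre => [|x xs IH] pre //=; rewrite nth_cat ltnn subnn /=; congr (_ :: _).
by have := IH (rcons pre x); rewrite size_rcons -cats1 -catA.
Qed.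

Lemma sem_pargs1 Z x xs : map (fun g => sem Z g (x :: xs)) (pargs 1 (size xs)) = xs.
Proof. exact: (sem_pargs Z [:: x]). Qed.

Lemma sem_pargs2 Z x y xs :
  map (fun g => sem Z g [:: x, y & xs]) (pargs 2 (size xs)) = xs.
Proof. exact: (sem_pargs Z [:: x; y]). Qed.

Lemma iota0S N : iota 0 N.+1 = rcons (iota 0 N) N.
Proof. by rewrite -addn1 iotaD cats1. Qed.

Definition pall P p :=
  PR (pconst 1) (PC pmul [:: PP 1; PC psign [:: PC P (PP 0 :: pargs 2 p)]]).
Lemma sem_pall Z P ps N : sem Z (pall P (size ps)) (N :: ps) =
  nat_of_bool (all (fun j => sem Z P (j :: ps) != 0) (iota 0 N)).
Proof.
rewrite semR; elim: N => [|N IH]; first exact: sem_pconst.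
rewrite iota0S all_rcons /= IH sem_pargs2 sem_psign sem_pmul.
by case: (all _ _); case: (_ != 0).
Qed.

Definition pex P p :=
  PC psign [:: PR PZ (PC padd [:: PP 1; PC P (PP 0 :: pargs 2 p)])].
Lemma sem_pex Z P ps N : sem Z (pex P (size ps)) (N :: ps) =
  nat_of_bool (has (fun j => sem Z P (j :: ps) != 0) (iota 0 N)).
Proof.
rewrite /pex semC1 semR sem_psign; congr nat_of_bool.
elim: N => // N IH; rewrite iota0S has_rcons /= sem_pargs2 sem_padd -IH.
by case: (prec _ _ N); case: (sem _ _ _).
Qed.

Opaque pall pex.

(* For every code [e] and arity [a] we build a
   program [clocked rm d e a] such that, on input [s :: xs] with
   [size xs = a], it outputs [ocode (eval s Z e xs)]: the fuel-[s] run of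
   [e] is unrolled into primitive recursion.  The simulated oracle [Z] is
   reached through the actual oracle [Z'] by the program [rm]
   (Z x = Z' (rm x)); [d] bounds the depth of the unrolling. *)

Definition ocode (o : option nat) : nat := if o is Some v then v.+1 else 0.

(* Unbounded search, as a primitive recursion over the search bound: the
   state is 0 while searching, 1 after an undefined value, [y.+2] once [y]
   is found. *)
Definition mu_step (F : nat -> option nat) (j st : nat) : nat :=
  if st != 0 then st
  else match F j with None => 1 | Some 0 => j.+2 | Some _ => 0 end.

Fixpoint mu_status (F : nat -> option nat) (y0 b : nat) : nat :=
  if b is b'.+1 then
    match F y0 with Some 0 => y0.+2 | Some _ => mu_status F y0.+1 b' | None => 1 end
  else 0.

Lemma mu_search_status F y0 b : ocode (mu_search F y0 b) = (mu_status F y0 b).-1.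
Proof. by elim: b y0 => //= b IH y0; case: (F y0) => [[|w]|]. Qed.

Lemma mu_statusE F y0 b : mu_status F y0 b.+1 =
  match F y0 with Some 0 => y0.+2 | Some _ => mu_status F y0.+1 b | None => 1 end.
Proof. by []. Qed.

Lemma mu_statusS F y0 b : mu_status F y0 b.+1 = mu_step F (y0 + b) (mu_status F y0 b).
Proof.
elim: b y0 => [|b IH] y0; first by rewrite addn0.
rewrite [LHS]mu_statusE IH mu_statusE -addSnnS.
by case: (F y0) => [[|w]|].
Qed.

Lemma mu_search_prec F b :
  ocode (mu_search F 0 b) = (prec 0 (mu_step F) b).-1.
Proof.
by rewrite mu_search_status; congr predn; elim: b => // b IH; rewrite mu_statusS IH.
Qed.

Definition pmu_step (v : prog) :=
  PC padd [:: PP 1; PC pmul [:: PC piszero [:: PP 1];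
    PC padd [:: PC piszero [:: v];
      PC pmul [:: PC pmul [:: PC piszero [:: PC ppred [:: v]]; PC psign [:: v]];
                  PC PS [:: PC PS [:: PP 0]]]]]].

Lemma sem_pmu_step Z v F j st l : sem Z v [:: j, st & l] = ocode (F j) ->
  sem Z (pmu_step v) [:: j, st & l] = mu_step F j st.
Proof.
move=> Ev; rewrite /pmu_step /= !(semC2, semC1, sem_padd, sem_pmul, sem_piszero,
  sem_psign, sem_ppred) Ev /mu_step.
case: st {Ev} => [|st] /=; last by rewrite mul0n addn0.
by case: (F j) => [[|w]|] //=; rewrite ?muln0 ?mul1n.
Qed.

Fixpoint pallpos (Ys : seq prog) : prog :=
  if Ys is Y :: Ys' then PC pmul [:: PC psign [:: Y]; pallpos Ys'] else pconst 1.

Lemma sem_pallpos Z Ys l :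
  sem Z (pallpos Ys) l = nat_of_bool (all (fun Y => sem Z Y l != 0) Ys).
Proof.
elim: Ys => [|Y Ys IH] /=; first exact: sem_pconst.
by rewrite IH sem_psign sem_pmul; case: (_ != 0); case: (all _ _).
Qed.

Lemma all_some_ocode (A : Type) (F : A -> option nat) l :
  all_some (map F l) = if all (fun g => ocode (F g) != 0) l
                       then Some (map (fun g => (ocode (F g)).-1) l) else None.
Proof. by elim: l => //= g l ->; case: (F g) => //= v; case: (all _ _). Qed.

Lemma decode_le k n : all (fun g => g <= n) (decode_list_fuel k n).
Proof.
elim: k n => //= k IH [|n] //=; apply/andP; split.
  exact: leq_trans (unpair1_le n) (leqnSn n).
apply/allP => g /(allP (IH (unpair n).2)) le_g.
exact: leq_trans le_g (leq_trans (unpair2_le n) (leqnSn n)).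
Qed.

Definition pfuel := PC ppred [:: PP 0].

(* One unfolding of [eval] for the code [e] at arity [a], evaluated on
   [s.+1 :: xs]; [sim g a'] is the simulator for a subcode [g] at arity
   [a'], to be called on [s :: _]. *)
Definition clocked_step (rm : prog) (sim : nat -> nat -> prog) (e a : nat) : prog :=
  let r := (unpair e).2 in
  match (unpair e).1 with
  | 0 => pconst 1
  | 1 => PC PS [:: PC PS [:: PP 1]]
  | 2 => PC PS [:: PP r.+1]
  | 3 => PC PS [:: PC PO [:: PC rm [:: PP 1]]]
  | 4 => let gs := decode_list (unpair r).2 in
         let Ys := map (fun g => PC (sim g a) (pfuel :: pargs 1 a)) gs in
         PC pmul [:: pallpos Ys; PC (sim (unpair r).1 (size gs))
                                    (pfuel :: map (fun Y => PC ppred [:: Y]) Ys)]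
  | 5 => let F := PC (sim (unpair r).1 a.-1) (pfuel :: pargs 1 a.-1) in
         let G := PC pmul [:: PC psign [:: PP 1];
                    PC (sim (unpair r).2 a.-1.+2)
                       [:: PC ppred [:: PP 2], PP 0, PC ppred [:: PP 1] & pargs 3 a.-1]] in
         PC (PR F G) [:: PP 1, PP 0 & pargs 2 a.-1]
  | 6 => let v := PC (sim r a.+1) [:: PC ppred [:: PP 2], PP 0 & pargs 3 a] in
         PC ppred [:: PC (PR PZ (pmu_step v)) (pfuel :: PP 0 :: pargs 1 a)]
  | _ => PZ
  end.

Fixpoint clocked (rm : prog) (d e a : nat) : prog :=
  if d is d'.+1 then PC pmul [:: PC psign [:: PP 0]; clocked_step rm (clocked rm d') e a]
  else PZ.

Section ClockedStep.

Variables (Z Z' : set) (rm : prog).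
Hypothesis rm_reduces : forall x, Z' (sem Z' rm [:: x]) = Z x.

Variables (sim : nat -> nat -> prog) (e : nat).
Hypothesis sim_correct : forall g s xs, g < e ->
  sem Z' (sim g (size xs)) (s :: xs) = ocode (eval s Z g xs).

Let r := (unpair e).2.

Lemma subcode1_lt : 3 < (unpair e).1 -> (unpair r).1 < e.
Proof. by move=> lt3; apply: leq_ltn_trans (unpair1_le r) (unpair2_lt _); lia. Qed.

Lemma subcode2_lt : 3 < (unpair e).1 -> (unpair r).2 < e.
Proof. by move=> lt3; apply: leq_ltn_trans (unpair2_le r) (unpair2_lt _); lia. Qed.

Lemma clocked_step_comp s xs : (unpair e).1 = 4 ->
  sem Z' (clocked_step rm sim e (size xs)) (s.+1 :: xs) = ocode (eval s.+1 Z e xs).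
Proof.
move=> e4; rewrite /clocked_step evalSE e4 -/r.
set gs := decode_list (unpair r).2.
have sim_gs g : g \in gs ->
    sem Z' (PC (sim g (size xs)) (pfuel :: pargs 1 (size xs))) (s.+1 :: xs) =
    ocode (eval s Z g xs).
  move=> in_g; rewrite semC /= sem_ppred sem_pargs1 sim_correct //.
  apply: leq_ltn_trans (subcode2_lt _); last by rewrite e4.
  exact: (allP (decode_le _ _)) g in_g.
rewrite semC2 sem_pmul sem_pallpos all_map all_some_ocode.
rewrite (eq_in_all (a2 := fun g => ocode (eval s Z g xs) != 0)); last first.
  by move=> g in_g; rewrite -sim_gs.
case: ifP => _; last by rewrite mul0n.
rewrite mul1n semC /= -!map_comp.
rewrite (_ : map _ gs = map (fun g => (ocode (eval s Z g xs)).-1) gs); last first.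
  by apply/eq_in_map => g in_g; rewrite /comp semC1 sim_gs // sem_ppred.
by rewrite sem_ppred -(size_map (fun g => (ocode (eval s Z g xs)).-1)) sim_correct
  // subcode1_lt // e4.
Qed.

Lemma clocked_step_rec s xs : (unpair e).1 = 5 ->
  sem Z' (clocked_step rm sim e (size xs)) (s.+1 :: xs) = ocode (eval s.+1 Z e xs).
Proof.
move=> e5; rewrite /clocked_step evalSE e5 -/r.
have lt_f : (unpair r).1 < e by rewrite subcode1_lt // e5.
have lt_g : (unpair r).2 < e by rewrite subcode2_lt // e5.
rewrite -size_behead semC.
rewrite (_ : map _ _ = [:: head 0 xs, s.+1 & behead xs]); last first.
  by case: xs => [|n rest] //=; rewrite (sem_pargs Z' [:: s.+1; n] rest).
rewrite semR; elim: (head 0 xs) => [|n IHn] /=.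
  by rewrite /= sem_ppred sem_pargs1 sim_correct.
rewrite IHn sem_pmul sem_psign /=.
case: (prim_rec _ n _) => [v|] /=; last by rewrite mul0n.
rewrite mul1n (sem_pargs Z' [:: n; v.+1; s.+1]) !sem_ppred.
by rewrite -[(size (behead xs)).+2]/(size [:: n, v & behead xs]) sim_correct.
Qed.

Lemma clocked_step_mu s xs : (unpair e).1 = 6 ->
  sem Z' (clocked_step rm sim e (size xs)) (s.+1 :: xs) = ocode (eval s.+1 Z e xs).
Proof.
move=> e6; rewrite /clocked_step evalSE e6 -/r.
have lt_r : r < e by apply: unpair2_lt; rewrite e6.
rewrite semC1 sem_ppred semC.
rewrite (_ : map _ _ = [:: s, s.+1 & xs]); last first.
  by rewrite /= sem_ppred (sem_pargs Z' [:: s.+1] xs).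
rewrite semR mu_search_prec; congr predn; apply: prec_ext => j st.
apply: sem_pmu_step.
rewrite semC /= (sem_pargs Z' [:: j; st; s.+1] xs) sem_ppred.
by rewrite -[(size xs).+1]/(size (j :: xs)) sim_correct.
Qed.

Lemma clocked_step_correct s xs :
  sem Z' (clocked_step rm sim e (size xs)) (s.+1 :: xs) = ocode (eval s.+1 Z e xs).
Proof.
case E: (unpair e).1 => [|[|[|[|[|[|[|t]]]]]]];
  try by [exact: clocked_step_comp | exact: clocked_step_rec | exact: clocked_step_mu];
  rewrite /clocked_step evalSE E //.
by rewrite /= rm_reduces; case: xs.
Qed.

End ClockedStep.

Lemma clocked_correct Z Z' rm (rm_reduces : forall x, Z' (sem Z' rm [:: x]) = Z x)
    d e s xs :
  e < d -> sem Z' (clocked rm d e (size xs)) (s :: xs) = ocode (eval s Z e xs).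
Proof.
elim: d e s xs => // d IH e [|s] xs lt_ed;
  rewrite [clocked _ _ _ _]/= semC2 sem_pmul semC1 sem_psign //.
rewrite mul1n (clocked_step_correct rm_reduces) // => g s' xs' lt_ge.
by apply: IH; apply: leq_trans lt_ge lt_ed.
Qed.

(* Unbounded search: the code [search q] halts on [n] iff [q] has a zero
   on some [y :: n]; this is how Sigma^0_1 conditions become codes. *)

Definition search (q : prog) : nat := pair 6 (compile q).

Lemma mu_search_found F y0 b v : mu_search F y0 b = Some v -> F v = Some 0.
Proof.
elim: b y0 => //= b IH y0.
by case Ey: (F y0) => [[|w]|] //; [case=> <- | exact: IH].
Qed.

Lemma mu_search_succeeds F (w : nat -> nat) y y0 b :
  (forall y', y' <= y -> F y' = Some (w y')) -> w y = 0 ->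
  y0 <= y -> y - y0 < b -> exists v, mu_search F y0 b = Some v.
Proof.
move=> F_def wy0; elim: b y0 => // b IH y0 le_y0y lt_b /=.
rewrite F_def //; case Ey0: (w y0) => [|u]; first by exists y0.
have ne_y0y : y0 != y by apply/eqP => Ey; move: Ey0; rewrite Ey wy0.
have lt_y0y : y0 < y by rewrite ltn_neqAle ne_y0y.
by apply: IH => //; lia.
Qed.

Lemma computes_uniform Z c F (P : nat -> seq nat) y :
  computes Z c F -> exists K, forall y', y' <= y -> eval K Z c (P y') = Some (F (P y')).
Proof.
move=> comp_c; elim: y => [|y [K evalK]].
  by have [k Ek] := comp_c (P 0); exists k => y'; rewrite leqn0 => /eqP ->.
have [k Ek] := comp_c (P y.+1); exists (maxn K k) => y'.
rewrite leq_eqVlt => /orP[/eqP -> | lt_y']; first exact: eval_mono (leq_maxr _ _) Ek.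
exact: eval_mono (leq_maxl _ _) (evalK y' lt_y').
Qed.

Lemma halts_search Z q n : halts Z (search q) n <-> exists y, sem Z q [:: y; n] = 0.
Proof.
split.
  move=> [[|k] [v]] //; rewrite evalSE unpair_pair /= => /mu_search_found Ev.
  exists v; have [k' Ek'] := compile_correct Z q [:: v; n].
  by rewrite -(eval_det Ev Ek').
move=> [y qy0].
have [K evalK] := computes_uniform (fun y' => [:: y'; n]) y (compile_correct Z q).
have lt_bound : y - 0 < maxn K y.+1 by rewrite subn0 leq_max ltnSn orbT.
have [v Ev] := mu_search_succeeds
  (F := fun y' => eval (maxn K y.+1) Z (compile q) [:: y'; n]) (y0 := 0)
  (fun y' le_y' => eval_mono (leq_maxl _ _) (evalK y' le_y')) qy0 (leq0n _) lt_bound.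
by exists (maxn K y.+1).+1, v; rewrite evalSE unpair_pair.
Qed.

(* Finite sets of naturals as binary numerals: [mask N f] codes the set of
   [i < N] with [f i]; the members of the set coded by [x] are the [i]
   with [bit x i]. *)

Fixpoint mask N (f : nat -> bool) : nat :=
  if N is N'.+1 then f 0 + 2 * mask N' (fun i => f i.+1) else 0.

Lemma mask_ext N f g : (forall i, i < N -> f i = g i) -> mask N f = mask N g.
Proof.
elim: N f g => //= N IH f g fg; rewrite fg // (IH (fun i => f i.+1) (fun i => g i.+1)) //.
by move=> i lt_iN; apply: fg.
Qed.

Lemma mask_mono N (f g : nat -> bool) : (forall i, f i -> g i) -> mask N f <= mask N g.
Proof.
elim: N f g => //= N IH f g fg.
have := IH (fun i => f i.+1) (fun i => g i.+1) (fun i => fg i.+1).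
by case Ef: (f 0); [rewrite (fg _ Ef); lia | case: (g 0); lia].
Qed.

Lemma bitS x i : bit x i.+1 = bit x./2 i.
Proof. by rewrite /bit iterSr. Qed.

Lemma bit_mask N f i : bit (mask N f) i = (i < N) && f i.
Proof.
elim: N f i => [|N IH] f i /=.
  by rewrite /bit (_ : iter i half 0 = 0) //; elim: i => //= i ->.
case: i => [|i]; first by rewrite /bit /= oddD oddM /=; case: (f 0).
by rewrite bitS mul2n half_bit_double IH.
Qed.

Lemma mask_bit K d : d < 2 ^ K -> mask K (bit d) = d.
Proof.
elim: K d => [|K IH] d /=; first by case: d.
move=> lt_d; rewrite (mask_ext (g := bit d./2)); last by move=> i _; rewrite bitS.
rewrite IH; first by rewrite -{3}(odd_double_half d) -mul2n.
by have := odd_double_half d; move: lt_d; rewrite expnS -!mul2n; lia.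
Qed.

Lemma bit_lt d i : bit d i -> i < d.
Proof. by rewrite -{1}(mask_bit (ltn_expl d (ltnSn 1))) bit_mask => /andP[]. Qed.

Lemma bits_le d m : (forall i, bit d i -> bit m i) -> d <= m.
Proof.
move=> sub_dm; have lt_2 x y : x < 2 ^ (x + y) by
  apply: leq_trans (ltn_expl x (ltnSn 1)) (leq_pexp2l _ (leq_addr _ _)).
have := mask_mono (d + m) sub_dm.
by rewrite (mask_bit (lt_2 d m)) (mask_bit (_ : m < 2 ^ (d + m))) // addnC.
Qed.

Lemma mask_add1 N f x : x < N -> f x = false ->
  mask N (fun i => (i == x) || f i) = 2 ^ x + mask N f.
Proof.
elim: N f x => // N IH f x lt_xN fx /=.
case: x lt_xN fx => [|x] lt_xN fx /=; first by rewrite fx expn0; lia.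
by rewrite (IH (fun i => f i.+1) x) // expnS; lia.
Qed.

Lemma canon_index_mask N D : all (fun x => x < N) D ->
  canon_index D = mask N (fun i => i \in D).
Proof.
have sum_mask (s : seq nat) : uniq s -> all (fun x => x < N) s ->
    \sum_(x <- s) 2 ^ x = mask N (fun i => i \in s).
  elim: s => [|x s IH] /=; first by rewrite big_nil; elim: N => //= N <-.
  move=> /andP[x_notin u_s] /andP[lt_xN lt_s].
  by rewrite big_cons IH // -mask_add1 //; apply/negbTE.
move=> lt_D; rewrite /canon_index sum_mask ?undup_uniq //.
  by apply: mask_ext => i _; rewrite mem_undup.
by apply/allP => x; rewrite mem_undup => /(allP lt_D).
Qed.

Lemma bit_canon_index D i : bit (canon_index D) i -> i \in D.
Proof.
have lt_D : all (fun x => x < (\max_(x <- D) x).+1) D.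
  by apply/allP => x x_in; rewrite ltnS; exact: leq_bigmax_seq.
by rewrite (canon_index_mask lt_D) bit_mask => /andP[].
Qed.

Lemma canon_index_bits d : canon_index [seq i <- iota 0 d | bit d i] = d.
Proof.
rewrite (canon_index_mask (N := d)); last first.
  by apply/allP => x; rewrite mem_filter mem_iota => /andP[_ /andP[_]].
rewrite -[RHS](mask_bit (ltn_expl d (ltnSn 1))); apply: mask_ext => i lt_id.
by rewrite mem_filter mem_iota /= lt_id andbT.
Qed.

Lemma U_bits Z e Y : U Z e Y <-> exists d, (forall i, bit d i -> Y i) /\ halts Z e d.
Proof.
split=> [[D [sub_DY halts_D]] | [d [sub_dY halts_d]]].
  by exists (canon_index D); split => // i /bit_canon_index; exact: sub_DY.
exists [seq i <- iota 0 d | bit d i]; split; last by rewrite canon_index_bits.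
by move=> x; rewrite mem_filter => /andP[/sub_dY].
Qed.

Lemma U_up Z e X Y : U Z e X -> Defs.subset X Y -> U Z e Y.
Proof. by move=> [D [sub_DX halts_D]] sub_XY; exists D; split => // x /sub_DX /sub_XY. Qed.

(* The class of sets which cannot be 2-coloured avoiding two given open
   classes. *)

Definition split_hits (h0 h1 : nat -> Prop) (n : nat) : Prop :=
  forall chi : nat -> bool,
    (exists d, (forall i, bit d i -> bit n i && chi i) /\ h0 d) \/
    (exists d, (forall i, bit d i -> bit n i && ~~ chi i) /\ h1 d).

Definition submask d n := all (fun i => bit d i ==> bit n i) (iota 0 n.+1).
Definition bits_disjoint d m n := all (fun i => ~~ (bit d i && bit m i)) (iota 0 n.+1).

Lemma submaskP d n : d <= n -> reflect (forall i, bit d i -> bit n i) (submask d n).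
Proof.
move=> le_dn; apply: (iffP allP) => [sub i bdi | sub i _]; last exact/implyP/sub.
have := sub i; rewrite mem_iota add0n ltnS (leq_trans (ltnW (bit_lt bdi)) le_dn).
by move=> /(_ isT) /implyP; apply.
Qed.

Lemma bits_disjointP d m n : d <= n ->
  reflect (forall i, bit d i -> ~~ bit m i) (bits_disjoint d m n).
Proof.
move=> le_dn; apply: (iffP allP) => [dis i bdi | dis i _]; last first.
  by apply/negP => /andP[/dis /negP].
have := dis i; rewrite mem_iota add0n ltnS (leq_trans (ltnW (bit_lt bdi)) le_dn).
by rewrite bdi => /(_ isT).
Qed.

(* [split_test g0 g1 n]: a decidable form of [split_hits], where colourings
   are represented by their first class [m] and witnesses are bounded. *)
Definition split_test (g0 g1 : nat -> bool) (n : nat) : bool :=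
  all (fun m => submask m n ==>
         (has (fun d => submask d m && g0 d) (iota 0 m.+1) ||
          has (fun d => submask d n && bits_disjoint d m n && g1 d) (iota 0 n.+1)))
      (iota 0 n.+1).

Lemma eq_split_test g0 g1 g0' g1' n :
  g0 =1 g0' -> g1 =1 g1' -> split_test g0 g1 n = split_test g0' g1' n.
Proof.
move=> eq0 eq1; apply: eq_all => m; congr (_ ==> (_ || _)); apply: eq_has => d.
  by rewrite eq0.
by rewrite eq1.
Qed.

Lemma mem_iota0 i n : (i \in iota 0 n) = (i < n).
Proof. by rewrite mem_iota. Qed.

(* Soundness: colour the set by [chi]; its first class [m] is tested. *)
Lemma split_test_hits (g0 g1 : nat -> bool) (h0 h1 : nat -> Prop) n :
  (forall d, g0 d -> h0 d) -> (forall d, g1 d -> h1 d) ->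
  split_test g0 g1 n -> split_hits h0 h1 n.
Proof.
move=> g0h0 g1h1 test chi.
pose m := mask n (fun i => bit n i && chi i).
have bit_m i : bit m i = bit n i && chi i.
  by rewrite bit_mask; case Eb: (bit n i); rewrite ?andbF // (bit_lt Eb).
have le_mn : m <= n by apply: bits_le => i; rewrite bit_m => /andP[].
have sub_mn : submask m n by apply/submaskP => // i; rewrite bit_m => /andP[].
have := allP test m; rewrite mem_iota0 ltnS le_mn sub_mn => /(_ isT) /orP[] /hasP[d].
- rewrite mem_iota0 ltnS => le_dm /andP[/submaskP-/(_ le_dm) sub_dm g0d].
  by left; exists d; split=> [i /sub_dm|]; [rewrite bit_m | exact: g0h0].
- rewrite mem_iota0 ltnS => le_dn /andP[/andP[/submaskP-/(_ le_dn) sub_dn]].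
  move=> /bits_disjointP-/(_ le_dn) dis_dm g1d.
  right; exists d; split=> [i bdi|]; last exact: g1h1.
  by have := dis_dm i bdi; rewrite bit_m sub_dn //= => ->.
Qed.

Lemma uniform_bound N (R : nat -> nat -> bool) :
  (forall m s s', s <= s' -> R m s -> R m s') ->
  (forall m, m < N -> exists s, R m s) -> exists s, forall m, m < N -> R m s.
Proof.
move=> R_mono; elim: N => [|N IH] R_ev; first by exists 0.
have [s1 R1] := IH (fun m lt_m => R_ev m (ltnW lt_m)).
have [s2 R2] := R_ev N (ltnSn N).
exists (maxn s1 s2) => m; rewrite ltnS leq_eqVlt => /orP[/eqP -> | lt_mN].
  exact: R_mono (leq_maxr _ _) R2.
exact: R_mono (leq_maxl _ _) (R1 m lt_mN).
Qed.

Lemma split_hits_test (g0 g1 : nat -> nat -> bool) n :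
  (forall s s' d, s <= s' -> g0 s d -> g0 s' d) ->
  (forall s s' d, s <= s' -> g1 s d -> g1 s' d) ->
  split_hits (fun d => exists s, g0 s d) (fun d => exists s, g1 s d) n ->
  exists s, split_test (g0 s) (g1 s) n.
Proof.
move=> g0_mono g1_mono hits.
suff [s test] : exists s, forall m, m < n.+1 -> submask m n ==>
   (has (fun d => submask d m && g0 s d) (iota 0 m.+1) ||
    has (fun d => submask d n && bits_disjoint d m n && g1 s d) (iota 0 n.+1)).
  by exists s; apply/allP => m; rewrite mem_iota0; exact: test.
apply: uniform_bound.
  move=> m s s' le_ss' /implyP test; apply/implyP => /test /orP[] /hasP[d d_in /andP[Hd gd]].
  - by apply/orP; left; apply/hasP; exists d => //; rewrite Hd (g0_mono _ _ _ le_ss').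
  - by apply/orP; right; apply/hasP; exists d => //; rewrite Hd (g1_mono _ _ _ le_ss').
move=> m; rewrite ltnS => le_mn; case sub_mn: (submask m n); last by exists 0.
move/submaskP: sub_mn => /(_ le_mn) sub_mn.
case: (hits (bit m)) => [] [d [sub_d [s gd]]]; exists s; rewrite implyTb.
- have le_dm : d <= m by apply: bits_le => i /sub_d /andP[].
  apply/orP; left; apply/hasP; exists d; first by rewrite mem_iota0 ltnS.
  by rewrite gd andbT; apply/submaskP => // i /sub_d /andP[].
- have le_dn : d <= n by apply: bits_le => i /sub_d /andP[].
  apply/orP; right; apply/hasP; exists d; first by rewrite mem_iota0 ltnS.
  rewrite gd andbT; apply/andP; split; first by apply/submaskP => // i /sub_d /andP[].
  by apply/bits_disjointP => // i /sub_d /andP[].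
Qed.

Definition psubmask :=
  PC (pall (PC pimpl [:: PC pbit [:: PP 0; PP 1]; PC pbit [:: PP 0; PP 2]]) 2)
     [:: PC PS [:: PP 1]; PP 0; PP 1].
Lemma sem_psubmask Z d n : sem Z psubmask [:: d; n] = nat_of_bool (submask d n).
Proof.
rewrite semC /= (sem_pall Z _ [:: d; n]); congr nat_of_bool; apply: eq_all => i.
by rewrite semC2 /= !sem_pbit sem_pimpl nat_of_bool_neq0.
Qed.
Opaque psubmask.

Definition pdisjoint :=
  PC (pall (PC piszero [:: PC pmul [:: PC pbit [:: PP 0; PP 1]; PC pbit [:: PP 0; PP 2]]]) 3)
     [:: PC PS [:: PP 2]; PP 0; PP 1; PP 2].
Lemma sem_pdisjoint Z d m n :
  sem Z pdisjoint [:: d; m; n] = nat_of_bool (bits_disjoint d m n).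
Proof.
rewrite semC /= (sem_pall Z _ [:: d; m; n]); congr nat_of_bool; apply: eq_all => i.
rewrite semC1 semC2 /= !sem_pbit sem_pmul sem_piszero.
by case: (bit d i); case: (bit m i).
Qed.
Opaque pdisjoint.

Definition ptest c := PC psign [:: c].
Lemma sem_ptest Z c s d :
  sem Z (ptest c) [:: s; d] = nat_of_bool (sem Z c [:: s; d] != 0).
Proof. by rewrite /ptest semC1 sem_psign. Qed.
Opaque ptest.

Definition pex0 c0 :=
  PC (pex (PC pmul [:: PC psubmask [:: PP 0; PP 2]; PC (ptest c0) [:: PP 1; PP 0]]) 2)
     [:: PC PS [:: PP 1]; PP 0; PP 1].
Lemma sem_pex0 Z c0 s m : sem Z (pex0 c0) [:: s; m] =
  nat_of_bool (has (fun d => submask d m && (sem Z c0 [:: s; d] != 0)) (iota 0 m.+1)).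
Proof.
rewrite semC /= (sem_pex Z _ [:: s; m]); congr nat_of_bool; apply: eq_has => d.
rewrite semC2 /= sem_psubmask sem_ptest sem_pmul.
by case: (submask d m); case: (sem Z c0 [:: s; d] != 0).
Qed.
Opaque pex0.

Definition pex1 c1 :=
  PC (pex (PC pmul [:: PC psubmask [:: PP 0; PP 2];
           PC pmul [:: PC pdisjoint [:: PP 0; PP 3; PP 2]; PC (ptest c1) [:: PP 1; PP 0]]]) 3)
     [:: PC PS [:: PP 1]; PP 0; PP 1; PP 2].
Lemma sem_pex1 Z c1 s n m : sem Z (pex1 c1) [:: s; n; m] =
  nat_of_bool (has (fun d => submask d n && bits_disjoint d m n && (sem Z c1 [:: s; d] != 0))
                   (iota 0 n.+1)).
Proof.
rewrite semC /= (sem_pex Z _ [:: s; n; m]); congr nat_of_bool; apply: eq_has => d.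
rewrite semC2 /= sem_psubmask sem_pdisjoint sem_ptest !sem_pmul.
by case: (submask d n); case: (bits_disjoint d m n); case: (sem Z c1 [:: s; d] != 0).
Qed.
Opaque pex1.

Definition psplit_test c0 c1 :=
  PC (pall (PC pimpl [:: PC psubmask [:: PP 0; PP 2];
             PC por [:: PC (pex0 c0) [:: PP 1; PP 0]; PC (pex1 c1) [:: PP 1; PP 2; PP 0]]]) 2)
     [:: PC PS [:: PP 1]; PP 0; PP 1].
Lemma sem_psplit_test Z c0 c1 s n : sem Z (psplit_test c0 c1) [:: s; n] =
  nat_of_bool (split_test (fun d => sem Z c0 [:: s; d] != 0)
                          (fun d => sem Z c1 [:: s; d] != 0) n).
Proof.
rewrite semC /= (sem_pall Z _ [:: s; n]); congr nat_of_bool; apply: eq_all => m.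
by rewrite [LHS]/= sem_psubmask sem_pex0 sem_pex1 sem_por sem_pimpl nat_of_bool_neq0.
Qed.
Opaque psplit_test.

Definition pleft := PC padd [:: PP 0; PP 0].
Definition pright := PC PS [:: PC padd [:: PP 0; PP 0]].

Lemma pleft_reduces X Y x : join X Y (sem (join X Y) pleft [:: x]) = X x.
Proof. by rewrite /pleft /= sem_padd /join addnn odd_double doubleK. Qed.

Lemma pright_reduces X Y x : join X Y (sem (join X Y) pright [:: x]) = Y x.
Proof. by rewrite /pright /= sem_padd /join addnn /= odd_double uphalf_double. Qed.

Definition halts_within (X : set) (e s d : nat) : bool := ocode (eval s X e [:: d]) != 0.

Lemma halts_withinP X e d : halts X e d <-> exists s, halts_within X e s d.
Proof.
split=> [[k [v Ek]] | [s]]; first by exists k; rewrite /halts_within Ek.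
by rewrite /halts_within; case Es: (eval s X e [:: d]) => [v|] // _; exists s, v.
Qed.

Lemma halts_within_mono X e s s' d :
  s <= s' -> halts_within X e s d -> halts_within X e s' d.
Proof.
rewrite /halts_within => le_ss'; case Es: (eval s X e [:: d]) => [v|] // _.
by rewrite (eval_mono le_ss' Es).
Qed.

Definition split_code (e0 e1 : nat) : nat :=
  search (PC piszero [:: psplit_test (clocked pleft e0.+1 e0 1) (clocked pright e1.+1 e1 1)]).

Lemma halts_split_code X0 X1 e0 e1 n :
  halts (join X0 X1) (split_code e0 e1) n <->
  exists s, split_test (halts_within X0 e0 s) (halts_within X1 e1 s) n.
Proof.
rewrite halts_search.
have sem_test s : sem (join X0 X1) (PC piszero [:: psplit_test (clocked pleft e0.+1 e0 1)
                                  (clocked pright e1.+1 e1 1)]) [:: s; n]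
   = nat_of_bool (~~ split_test (halts_within X0 e0 s) (halts_within X1 e1 s) n).
  rewrite semC1 sem_psplit_test sem_piszero.
  rewrite (eq_split_test (g0' := halts_within X0 e0 s) (g1' := halts_within X1 e1 s)).
  - by case: split_test.
  - by move=> d; rewrite /halts_within (clocked_correct (@pleft_reduces X0 X1) _ [:: d]).
  - by move=> d; rewrite /halts_within (clocked_correct (@pright_reduces X0 X1) _ [:: d]).
by split=> [] [s test]; exists s; move: (sem_test s); rewrite ?test //; case: split_test.
Qed.

Lemma U_split_code X0 X1 e0 e1 Y :
  U (join X0 X1) (split_code e0 e1) Y <->
  exists n, (forall i, bit n i -> Y i) /\ split_hits (halts X0 e0) (halts X1 e1) n.
Proof.
rewrite U_bits; split=> [] [n [sub_nY hits]]; exists n; split => //.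
  move/halts_split_code: hits => [s test].
  by apply: split_test_hits test => d hd; apply/halts_withinP; exists s.
apply/halts_split_code/split_hits_test; try exact: halts_within_mono.
by move=> chi; case: (hits chi) => [] [d [sub_d /halts_withinP hd]]; [left | right]; exists d.
Qed.

Definition nonempty_code : nat := search (PC piszero [:: PC psign [:: PP 1]]).

Lemma halts_nonempty Z n : halts Z nonempty_code n <-> n != 0.
Proof.
have sem_test y : sem Z (PC piszero [:: PC psign [:: PP 1]]) [:: y; n] = nat_of_bool (n == 0).
  by rewrite !semC1 /= sem_psign sem_piszero; case: n.
rewrite halts_search; split=> [[y]|n_ne0]; last by exists 0; rewrite sem_test (negbTE n_ne0).
by rewrite sem_test; case: eqP.
Qed.

Lemma bit_exists d : d != 0 -> exists i, bit d i.
Proof.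
move=> d_ne0; apply: NNPP => no_bit; move: d_ne0.
have mask0 N : mask N (fun _ => false) = 0 by elim: N => //= N ->.
rewrite -(mask_bit (ltn_expl d (ltnSn 1))) (mask_ext (g := fun _ => false)) ?mask0 //.
by move=> i _; apply/negP => bdi; apply: no_bit; exists i.
Qed.

Lemma U_nonempty Z Y : U Z nonempty_code Y <-> exists i, Y i.
Proof.
rewrite U_bits; split=> [[d [sub_dY /halts_nonempty /bit_exists [i /sub_dY]]] | [i Yi]].
  by exists i.
exists (canon_index [:: i]); split.
  by move=> j /bit_canon_index; rewrite inE => /eqP ->.
by apply/halts_nonempty; rewrite /canon_index /= big_cons big_nil addn0 expn_eq0.
Qed.

Section Compactness.

Variable B : nat -> (nat -> bool) -> Prop.
Hypothesis B_local : forall N chi chi',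
  (forall i, i < N -> chi i = chi' i) -> B N chi -> B N chi'.
Hypothesis B_antitone : forall N N' chi, N <= N' -> B N' chi -> B N chi.

Definition agrees (chi : nat -> bool) (s : seq bool) : Prop :=
  forall i, i < size s -> chi i = nth false s i.

Definition extendable (s : seq bool) : Prop :=
  forall N, exists chi, agrees chi s /\ B N chi.

Lemma extendable_rcons s :
  extendable s -> extendable (rcons s true) \/ extendable (rcons s false).
Proof.
move=> ext_s; apply: NNPP => /not_or_and[].
move=> /not_all_ex_not[Nt /not_ex_all_not no_t] /not_all_ex_not[Nf /not_ex_all_not no_f].
have [chi [agr_s B_chi]] := ext_s (maxn Nt Nf).
have agr_chi : agrees chi (rcons s (chi (size s))).
  move=> i; rewrite size_rcons ltnS leq_eqVlt => /orP[/eqP -> | lt_i].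
    by rewrite nth_rcons ltnn eqxx.
  by rewrite nth_rcons lt_i agr_s.
case Ec: (chi (size s)) agr_chi => agr_chi.
- by apply: (no_t chi); split=> //; exact: B_antitone (leq_maxl _ _) B_chi.
- by apply: (no_f chi); split=> //; exact: B_antitone (leq_maxr _ _) B_chi.
Qed.

Definition pickb (P : Prop) : bool := if excluded_middle_informative P then true else false.

(* The leftmost extendable branch, built colour by colour. *)
Fixpoint branch (n : nat) : seq bool :=
  if n is n'.+1 then rcons (branch n') (pickb (extendable (rcons (branch n') true)))
  else [::].

Lemma size_branch n : size (branch n) = n.
Proof. by elim: n => //= n IH; rewrite size_rcons IH. Qed.

Lemma branch_prefix n m i : n <= m -> i < n -> nth false (branch m) i = nth false (branch n) i.
Proof.
move=> le_nm lt_in; elim: m le_nm => [|m IH]; first by rewrite leqn0 => /eqP ->.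
rewrite leq_eqVlt => /orP[/eqP -> //| lt_nm] /=.
by rewrite nth_rcons size_branch (leq_trans lt_in lt_nm) IH.
Qed.

Lemma compactness :
  (forall N, exists chi, B N chi) -> exists chi, forall N, B N chi.
Proof.
move=> B_sat.
have ext_branch n : extendable (branch n).
  elim: n => [|n IH] /=; first by move=> N; have [chi B_chi] := B_sat N; exists chi.
  rewrite /pickb; case: excluded_middle_informative => // no_t.
  by case: (extendable_rcons IH).
exists (fun i => nth false (branch i.+1) i) => N.
have [chi [agr B_chi]] := ext_branch N N.
apply: B_local B_chi => i lt_iN.
by rewrite agr ?size_branch // (branch_prefix lt_iN (ltnSn i)).
Qed.

End Compactness.

Definition avoids (h0 h1 : nat -> Prop) (n : nat) (chi : nat -> bool) : Prop :=
  ~ (exists d, (forall i, bit d i -> bit n i && chi i) /\ h0 d) /\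
  ~ (exists d, (forall i, bit d i -> bit n i && ~~ chi i) /\ h1 d).

Lemma not_split_hits h0 h1 n : ~ split_hits h0 h1 n -> exists chi, avoids h0 h1 n chi.
Proof.
move=> /not_all_ex_not[chi /not_or_and[no0 no1]]; by exists chi.
Qed.

Lemma avoids_prefix h0 h1 (Z : set) N N' chi chi' :
  N <= N' -> (forall i, i < N -> chi i = chi' i) ->
  avoids h0 h1 (mask N' Z) chi' -> avoids h0 h1 (mask N Z) chi.
Proof.
move=> le_NN' agree [no0 no1]; split=> [[d [sub_d hd]] | [d [sub_d hd]]].
- apply: no0; exists d; split=> // i /sub_d; rewrite !bit_mask => /andP[/andP[lt_iN Zi] ci].
  by rewrite (leq_trans lt_iN le_NN') Zi -agree.
- apply: no1; exists d; split=> // i /sub_d; rewrite !bit_mask => /andP[/andP[lt_iN Zi] ci].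
  by rewrite (leq_trans lt_iN le_NN') Zi -agree.
Qed.

Definition indivisible (A : cls) (X : set) : Prop :=
  forall P Q : set, (forall n, X n -> P n || Q n) -> A P \/ A Q.

Lemma indivisible_mem A X : indivisible A X -> A X.
Proof. by move=> indiv; case: (indiv X X) => // n ->. Qed.

Lemma indivisible_split_class (A : cls) X0 X1 e0 e1 Z :
  (forall Y, A Y -> U X0 e0 Y) -> (forall Y, A Y -> U X1 e1 Y) ->
  indivisible A Z -> U (join X0 X1) (split_code e0 e1) Z.
Proof.
move=> A_U0 A_U1 indiv; apply/U_split_code; apply: NNPP => not_split.
pose B N chi := avoids (halts X0 e0) (halts X1 e1) (mask N Z) chi.
have [chi avoid] : exists chi, forall N, B N chi.
  apply: compactness.
  - by move=> N chi chi' agree; apply: avoids_prefix (leqnn N) _ => i /agree.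
  - by move=> N N' chi le_NN'; apply: avoids_prefix le_NN' _.
  move=> N; apply: not_split_hits => hits; apply: not_split; exists (mask N Z).
  by split=> // i; rewrite bit_mask => /andP[].
have in_prefix d i : bit d i -> bit (mask d Z) i = Z i by move=> /bit_lt lt_id; rewrite bit_mask lt_id.
case: (indiv (fun n => Z n && chi n) (fun n => Z n && ~~ chi n)).
- by move=> n ->; case: (chi n).
- move=> /A_U0 /U_bits [d [sub_d hd]]; case: (avoid d) => no0 _; apply: no0.
  by exists d; split=> // i bdi; rewrite in_prefix //; exact: sub_d.
- move=> /A_U1 /U_bits [d [sub_d hd]]; case: (avoid d) => _ no1; apply: no1.
  by exists d; split=> // i bdi; rewrite in_prefix //; exact: sub_d.
Qed.

Lemma split_class_cover X0 X1 e0 e1 X (Y0 Y1 : set) :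
  U (join X0 X1) (split_code e0 e1) X -> (forall n, X n -> Y0 n || Y1 n) ->
  U X0 e0 Y0 \/ U X1 e1 Y1.
Proof.
move=> /U_split_code[n [sub_nX hits]] cover.
case: (hits Y0) => [] [d [sub_d hd]]; [left | right]; apply/U_bits; exists d; split=> // i.
  by move=> /sub_d /andP[].
move=> /sub_d /andP[/sub_nX /cover]; by case: (Y0 i).
Qed.

Lemma largeness_up A X Y : largeness A -> A X -> Defs.subset X Y -> A Y.
Proof. by case=> _ A_up _; exact: A_up. Qed.

(* For a largeness class [A], every finite cover of omega has an
   indivisible piece: otherwise the 2-covers witnessing divisibility of
   all pieces together form a finite cover of omega with no piece in [A]. *)
Lemma indivisible_cover (A : cls) : largeness A -> forall k (Y : nat -> set),
  (forall n, exists2 j, j < k & Y j n) -> exists2 j, j < k & indivisible A (Y j).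
Proof.
move=> [_ _ A_cover] k Y cover; apply: NNPP => no_indiv.
have divide j : exists pq : set * set, j < k ->
    (forall n, Y j n -> pq.1 n || pq.2 n) /\ ~ A pq.1 /\ ~ A pq.2.
  have [lt_jk|ge_jk] := boolP (j < k); last by exists (Y 0, Y 0) => lt_jk; case/negP: ge_jk.
  have : ~ indivisible A (Y j) by move=> indiv; apply: no_indiv; exists j.
  move=> /not_all_ex_not[P] /not_all_ex_not[Q] not_split.
  have [PQ /not_or_and[nP nQ]] := imply_to_and _ _ not_split.
  by exists (P, Q).
pose pq j := proj1_sig (constructive_indefinite_description _ (divide j)).
have pqP j : j < k -> (forall n, Y j n -> (pq j).1 n || (pq j).2 n) /\
                       ~ A (pq j).1 /\ ~ A (pq j).2.
  exact: proj2_sig (constructive_indefinite_description _ (divide j)).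
pose piece i := if odd i then (pq i./2).2 else (pq i./2).1.
have [i lt_i A_i] : exists2 i, i < k.*2 & A (piece i).
  apply: A_cover => n; have [j lt_jk Yjn] := cover n.
  have [/(_ n Yjn) /orP[pq1 | pq2] _] := pqP j lt_jk.
  - by exists j.*2; rewrite ?ltn_double // /piece odd_double doubleK.
  - by exists j.*2.+1; rewrite ?ltn_Sdouble // /piece /= odd_double /= uphalf_double.
have lt_half : i./2 < k by rewrite -ltn_double; have := odd_double_half i; lia.
have [_ [n1 n2]] := pqP _ lt_half.
by move: A_i; rewrite /piece; case: (odd i).
Qed.

Lemma large_meet_indivisible (A B : cls) : largeness A ->
  (forall X Y, B X -> Defs.subset X Y -> B Y) ->
  (forall X, indivisible A X -> B X) -> largeness (fun Y => A Y /\ B Y).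
Proof.
move=> A_large B_up indiv_B.
have mem_AB X : indivisible A X -> A X /\ B X by split; [exact: indivisible_mem | exact: indiv_B].
split.
- have [j _ indiv] := indivisible_cover A_large (k := 1) (Y := fun _ _ => true)
    (fun n => ex_intro2 _ _ 0 isT isT).
  by exists (fun _ => true); exact: mem_AB.
- by move=> X Y [AX BX] sub_XY; split; [exact: largeness_up sub_XY | exact: B_up sub_XY].
- by move=> k Y cover; have [j lt_jk indiv] := indivisible_cover A_large cover; exists j => //; exact: mem_AB.
Qed.

(* A minimal largeness class does not contain the empty set: intersected
   with the class of nonempty sets it would remain a largeness class. *)
Lemma minimal_empty_notin Xs A : largeness A -> minimal Xs A -> ~ A (fun _ => false).
Proof.
move=> A_large A_min A_empty.
have A_all Y : A Y by apply: largeness_up A_empty _.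
case: (A_min (Xs 0) (ex_intro _ 0 (fun _ => erefl)) nonempty_code) => [sub | not_large].
  by have /U_nonempty[i] := sub _ A_empty.
apply: not_large; split.
- by exists (fun _ => true); split=> //; apply/U_nonempty; exists 0.
- by move=> X Y [_ UX] sub_XY; split=> //; exact: U_up sub_XY.
- move=> k Y cover; have [j lt_jk Yj0] := cover 0.
  by exists j => //; split=> //; apply/U_nonempty; exists 0.
Qed.

(* If both pieces [Y0], [Y1]
   of a cover of [X] lie outside, they are excluded by some [U X_i0 e0],
   [U X_i1 e1]; the class of [split_code e0 e1] relative to [X_i0 (+) X_i1]
   contains all indivisible sets, so by minimality it contains the whole
   class, in particular [X], which separates [Y0] or [Y1] as excluded. *)
Lemma minimal_split Xs C :
  (forall X Y, coded_by Xs X -> coded_by Xs Y -> coded_by Xs (join X Y)) ->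
  largeness (U_C Xs C) -> minimal Xs (U_C Xs C) ->
  forall X (Y0 Y1 : set), U_C Xs C X -> (forall n, X n -> Y0 n || Y1 n) ->
  U_C Xs C Y0 \/ U_C Xs C Y1.
Proof.
move=> join_closed A_large A_min X Y0 Y1 AX cover; apply: NNPP => /not_or_and[nY0 nY1].
have excluded Y : ~ U_C Xs C Y -> exists e i, C e i /\ ~ U (Xs i) e Y.
  move=> nY; apply: NNPP => none; apply: nY => e i Cei.
  by apply: NNPP => nU; apply: none; exists e, i.
have [e0 [i0 [C0 nU0]]] := excluded _ nY0.
have [e1 [i1 [C1 nU1]]] := excluded _ nY1.
have indiv_split Z : indivisible (U_C Xs C) Z -> U (join (Xs i0) (Xs i1)) (split_code e0 e1) Z.
  by apply: indivisible_split_class => Y AY; [exact: AY C0 | exact: AY C1].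
have coded : coded_by Xs (join (Xs i0) (Xs i1)) by apply: join_closed; [exists i0 | exists i1].
case: (A_min _ coded (split_code e0 e1)) => [sub | not_large].
  by case: (split_class_cover (sub X AX) cover).
by apply: not_large; apply: large_meet_indivisible => // Z Z' /U_up; apply.
Qed.

Lemma partition_regular_of_split (A : cls) :
  (forall X Y, A X -> Defs.subset X Y -> A Y) -> ~ A (fun _ => false) ->
  (forall X (Y0 Y1 : set), A X -> (forall n, X n -> Y0 n || Y1 n) -> A Y0 \/ A Y1) ->
  forall X, A X -> forall k (Y : nat -> set),
    (forall n, X n -> exists2 j, j < k & Y j n) -> exists2 j, j < k & A (Y j).
Proof.
move=> A_up A_nonempty A_split X AX k; elim: k X AX => [|k IH] X AX Y cover.
  by exfalso; apply/A_nonempty/(A_up _ _ AX) => n /cover[].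
pose Yrest n := has (fun j => Y j n) (iota 0 k).
case: (A_split X (Y k) Yrest AX) => [n /cover[j]|AYk|Arest].
- rewrite ltnS leq_eqVlt => /orP[/eqP -> -> //| lt_jk Yjn].
  by apply/orP; right; apply/hasP; exists j; rewrite ?mem_iota0.
- by exists k.
- have rest_cover n : Yrest n -> exists2 j, j < k & Y j n.
    by move=> /hasP[j]; rewrite mem_iota0 => lt_jk Yjn; exists j.
  by have [j lt_jk AYj] := IH Yrest Arest Y rest_cover; exists j => //; exact: ltnW.
Qed.

Unset Implicit Arguments.

Theorem corollary2p13 (Xs : nat -> set) (C : nat -> nat -> Prop) :
  scott_set (coded_by Xs) ->
  largeness (U_C Xs C) ->
  minimal Xs (U_C Xs C) ->
  partition_regular (U_C Xs C).
Proof.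
move=> [_ join_closed _] A_large A_min; split=> //.
apply: partition_regular_of_split.
- by move=> X Y; exact: largeness_up.
- exact: minimal_empty_notin A_min.
- exact: minimal_split.
Qed.
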